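(* Let $n$ be an odd integer and $k\ge 1$ an integer with $2^k<n<2^{k+1}$, and set $a=n-2^k$. Then there is an orientation of the $n$-cube in which every vertex has in-degree $a$ or $n$.
   Context: The $n$-cube is the graph on binary $n$-tuples with edges between tuples differing in exactly one coordinate. An orientation assigns a direction to each edge; the in-degree of a vertex is the number of edges directed into it. *)

From HB Require Import structures.
From mathcomp Require Import all_boot.
Set Implicit Arguments. Unset Strict Implicit. Unset Printing Implicit Defensive.

Definition cube_vertex (n : nat) := {ffun 'I_n -> bool}.

Definition cube_adj (n : nat) (u v : cube_vertex n) : bool :=
  #|[set i : 'I_n | u i != v i]| == 1.

(* An orientation of the n-cube: a relation o where o u v means the edge
   {u,v} is directed from u to v.  Only edges may be oriented, and each edge
   gets exactly one direction. *)
Definition is_cube_orientation (n : nat) (o : rel (cube_vertex n)) : Prop :=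
  (forall u v, o u v -> cube_adj u v) /\
  (forall u v, cube_adj u v -> o u v (+) o v u).

Definition indeg (n : nat) (o : rel (cube_vertex n)) (v : cube_vertex n) : nat :=
  #|[set u : cube_vertex n | o u v]|.

(* Every edge joins a vertex of even weight to one of odd weight, so it is
   enough to say which edges leave each even vertex v.  Let s(v) < 2^k be the
   Hamming syndrome of v, the xor of the positions j < 2^k with v_j = 1, and
   let v send out its edges in the directions i < 2^k if s(v) < a, and no edge
   otherwise; v then has in-degree n - 2^k = a or n.  An odd vertex w receives
   the edge in direction i exactly when i < 2^k and s(w) xor i = s(flip w i)
   < a; as xor by s(w) permutes [0, 2^k), there are exactly a such i. *)
From Stdlib Require Import PeanoNat.
From HB Require Import structures.
From mathcomp Require Import all_boot.
Set Implicit Arguments. Unset Strict Implicit. Unset Printing Implicit Defensive.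

Lemma pow2E (k : nat) : Nat.pow 2 k = 2 ^ k.
Proof. by elim: k => [|k IH] //=; rewrite expnS -IH. Qed.

Lemma ltn_lxor_pow2 (k x y : nat) :
  x < 2 ^ k -> y < 2 ^ k -> Nat.lxor x y < 2 ^ k.
Proof.
rewrite -!pow2E => /ltP hx /ltP hy; apply/ltP.
have high_bits0 z : (z < Nat.pow 2 k)%coq_nat ->
    forall m, (k <= m)%coq_nat -> Nat.testbit z m = false.
  by move=> hz m hm; rewrite -(Nat.mod_small _ _ hz) Nat.mod_pow2_bits_high.
suff -> : Nat.lxor x y = Nat.lxor x y mod Nat.pow 2 k.
  by apply: Nat.mod_upper_bound; apply: Nat.pow_nonzero.
apply: Nat.bits_inj => m; case: (Nat.lt_ge_cases m k) => hm.
- by rewrite Nat.mod_pow2_bits_low.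
- by rewrite Nat.mod_pow2_bits_high // Nat.lxor_spec !high_bits0.
Qed.

Lemma lxorK (x : nat) : involutive (Nat.lxor x).
Proof. by move=> y; rewrite -Nat.lxor_assoc Nat.lxor_nilpotent Nat.lxor_0_l. Qed.

HB.instance Definition _ := Monoid.isComLaw.Build nat 0 Nat.lxor
  (fun a b c => esym (Nat.lxor_assoc a b c)) Nat.lxor_comm Nat.lxor_0_l.

Lemma card_ltn_ord (n m : nat) : m <= n -> #|[set i : 'I_n | i < m]| = m.
Proof.
move=> le_mn.
have -> : [set i : 'I_n | i < m] = widen_ord le_mn @: [set: 'I_m].
  apply/setP => i; rewrite inE; apply/idP/imsetP => [lt_im | [j _ ->]].
    by exists (Ordinal lt_im) => //; apply: val_inj.
  by rewrite /= ltn_ord.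
rewrite card_imset ?cardsT ?card_ord // => j1 j2 /(congr1 val) /= eq_j.
exact: val_inj.
Qed.

Lemma card_lxor_ltn (n k a x : nat) : 2 ^ k <= n -> a <= 2 ^ k -> x < 2 ^ k ->
  #|[set i : 'I_n | (i < 2 ^ k) && (Nat.lxor x i < a)]| = a.
Proof.
move=> le_kn le_ak lt_xk.
have lt_lxor (j : 'I_a) : Nat.lxor x j < 2 ^ k.
  by apply: ltn_lxor_pow2 => //; apply: leq_trans (ltn_ord j) le_ak.
pose f (j : 'I_a) : 'I_n := Ordinal (leq_trans (lt_lxor j) le_kn).
have -> : [set i : 'I_n | (i < 2 ^ k) && (Nat.lxor x i < a)] = f @: [set: 'I_a].
  apply/setP => i; rewrite inE; apply/idP/imsetP => [/andP [_ lt_ia] | [j _ ->]].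
    by exists (Ordinal lt_ia) => //; apply: val_inj; rewrite /= lxorK.
  by rewrite /= lt_lxor lxorK ltn_ord.
rewrite card_imset ?cardsT ?card_ord // => j1 j2 /(congr1 val) /= eq_f.
by apply: val_inj; rewrite /= -(lxorK x j1) eq_f lxorK.
Qed.

Section Cube.
Variable n : nat.
Implicit Types (u v w : cube_vertex n) (i : 'I_n).

Definition cube_flip v i : cube_vertex n :=
  [ffun j => if j == i then ~~ v j else v j].

Lemma cube_flipK i : involutive (cube_flip^~ i).
Proof. by move=> v; apply/ffunP => j; rewrite !ffunE; case: eqP => // ->; rewrite negbK. Qed.

Lemma cube_flip_inj v : injective (cube_flip v).
Proof.
move=> i j /ffunP /(_ i); rewrite !ffunE eqxx; case: eqP => [->//|_].
by case: (v i).
Qed.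

Lemma cube_adj_flip v i : cube_adj (cube_flip v i) v.
Proof.
apply/cards1P; exists i; apply/setP => j; rewrite !inE ffunE.
by case: (j == i); case: (v j).
Qed.

Lemma cube_adjP u v : cube_adj u v -> exists i, u = cube_flip v i.
Proof.
move=> /cards1P [i /setP u_v_i]; exists i; apply/ffunP => j.
by move: (u_v_i j); rewrite !inE ffunE; case: (j == i); case: (u j); case: (v j).
Qed.

(* d w i says that the edge of w in direction i points into w; this is an
   orientation as soon as the two endpoints of every edge disagree. *)
Definition orientation_of (d : cube_vertex n -> 'I_n -> bool) : rel (cube_vertex n) :=
  fun u w => [exists i, (u == cube_flip w i) && d w i].

Section OrientationOf.
Variable d : cube_vertex n -> 'I_n -> bool.

Lemma orientation_of_flip v i : orientation_of d (cube_flip v i) v = d v i.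
Proof.
apply/existsP/idP => [[j /andP [/eqP /cube_flip_inj ->]] // | d_vi].
by exists i; rewrite eqxx.
Qed.

Hypothesis d_flip : forall v i, d (cube_flip v i) i = ~~ d v i.

Lemma orientation_ofP : is_cube_orientation (orientation_of d).
Proof.
split=> [u v /existsP [i /andP [/eqP -> _]] | u v /cube_adjP [i ->]].
  exact: cube_adj_flip.
rewrite orientation_of_flip -{2}(cube_flipK i v) orientation_of_flip d_flip.
by case: (d v i).
Qed.

Lemma indeg_orientation_of w : indeg (orientation_of d) w = #|[set i | d w i]|.
Proof.
rewrite /indeg.
have -> : [set u | orientation_of d u w] = cube_flip w @: [set i | d w i].
  apply/setP => u; rewrite inE; apply/existsP/imsetP.
    by case=> i /andP [/eqP -> d_wi]; exists i; rewrite ?inE.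
  by case=> i; rewrite inE => d_wi ->; exists i; rewrite eqxx.
exact/card_imset/cube_flip_inj.
Qed.

End OrientationOf.

Definition cube_parity v : bool := \big[addb/false]_j v j.

Lemma cube_parity_flip v i : cube_parity (cube_flip v i) = ~~ cube_parity v.
Proof.
rewrite /cube_parity (bigD1 i) //= [in RHS](bigD1 i) //= ffunE eqxx addNb.
by congr (~~ (_ (+) _)); apply: eq_bigr => j /negPf ne_ji; rewrite ffunE ne_ji.
Qed.

Variable k : nat.

(* The syndrome of the Hamming code of length 2^k - 1, computed on the first
   2^k coordinates (coordinate 0 never contributes). *)
Definition syndrome v : nat :=
  \big[Nat.lxor/0]_(j : 'I_n | j < 2 ^ k) (if v j then val j else 0).

Lemma syndrome_flip v i : i < 2 ^ k ->
  syndrome (cube_flip v i) = Nat.lxor (syndrome v) i.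
Proof.
move=> lt_ik; rewrite /syndrome (bigD1 i) //= [in RHS](bigD1 i) //= ffunE eqxx.
rewrite (eq_bigr (fun j : 'I_n => if v j then val j else 0)); last first.
  by move=> j /andP [_ /negPf ne_ji]; rewrite ffunE ne_ji.
rewrite [RHS]Nat.lxor_comm -Nat.lxor_assoc.
by case: (v i); rewrite /= ?Nat.lxor_nilpotent ?Nat.lxor_0_r.
Qed.

Lemma syndrome_ltn v : syndrome v < 2 ^ k.
Proof.
apply: (big_ind (fun x => x < 2 ^ k)); rewrite ?expn_gt0 //.
  exact: ltn_lxor_pow2.
by move=> j lt_jk; case: (v j); rewrite ?expn_gt0.
Qed.

Variable a : nat.

Definition syndrome_rule v i : bool :=
  if cube_parity v then (syndrome (cube_flip v i) < a) && (i < 2 ^ k)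
  else ~~ ((syndrome v < a) && (i < 2 ^ k)).

Lemma syndrome_rule_flip v i : syndrome_rule (cube_flip v i) i = ~~ syndrome_rule v i.
Proof. by rewrite /syndrome_rule cube_parity_flip cube_flipK; case: cube_parity; rewrite ?negbK. Qed.

Lemma card_syndrome_rule w : 2 ^ k <= n -> a <= 2 ^ k ->
  let d := #|[set i | syndrome_rule w i]| in [\/ d = a, d = n - 2 ^ k | d = n].
Proof.
move=> le_kn le_ak; rewrite /syndrome_rule.
case: (cube_parity w); last case: (syndrome w < a).
- apply: Or31; rewrite -[RHS](card_lxor_ltn le_kn le_ak (syndrome_ltn w)).
  apply/eq_card => i; rewrite !inE.
  case: (ltnP i (2 ^ k)) => [lt_ik | _]; last by rewrite andbF.
  by rewrite syndrome_flip // andbC.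
- apply: Or32; rewrite (_ : [set i | _] = ~: [set i : 'I_n | i < 2 ^ k]).
    by rewrite cardsCs setCK card_ltn_ord // card_ord.
  by apply/setP => i; rewrite !inE.
- by apply: Or33; rewrite -[RHS]card_ord; apply/eq_card => i; rewrite !inE.
Qed.

End Cube.

Theorem mainTheorem5 (n k : nat) :
  odd n -> 1 <= k -> 2 ^ k < n < 2 ^ k.+1 ->
  exists o : rel (cube_vertex n),
    is_cube_orientation o /\
    forall v : cube_vertex n, indeg o v = n - 2 ^ k \/ indeg o v = n.
Proof.
move=> _ _ /andP [lt_kn lt_nk1].
have le_kn : 2 ^ k <= n := ltnW lt_kn.
have le_ak : n - 2 ^ k <= 2 ^ k.
  by rewrite leq_subLR addnn -mul2n -expnS ltnW.
exists (orientation_of (syndrome_rule k (n - 2 ^ k))); split.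
  exact/orientation_ofP/syndrome_rule_flip.
move=> v; rewrite indeg_orientation_of.
by case: (card_syndrome_rule v le_kn le_ak) => ->; [left | left | right].
Qed.
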